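(* Let $y$ be an integer with $M(0,y)\neq\emptyset$. Then every minimal graph in $M(0,y)$ is nonseparable.
   Context: All graphs are finite, simple and undirected; the empty graph is allowed, with $\chi=\mathrm{cl}=0$. $\mathrm{cl}(G)$ is the clique number, $\chi(G)$ the chromatic number, and $f(G)=\chi(G)-\mathrm{cl}(G)$. For integers $x,y$, $M(x,y)=\{G: |V(G)|<\chi(G)+2f(G)-x \text{ and } f(G)\le y\}$. A graph $G_0$ in a nonempty set $\mathcal M$ of graphs is minimal in $\mathcal M$ if $|V(G_0)|=\min\{|V(G)|:G\in\mathcal M\}$. For vertex-disjoint graphs $G_1,G_2$, the join $G_1+G_2$ has vertex set $V(G_1)\cup V(G_2)$ and edges those of $G_1$, those of $G_2$, and all pairs $\{u,v\}$ with $u\in V(G_1)$, $v\in V(G_2)$. $G$ is separable if $G=G_1+G_2$ with both $V(G_1),V(G_2)$ nonempty; otherwise nonseparable. *)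

From mathcomp Require Import all_boot all_order all_algebra.
Set Implicit Arguments. Unset Strict Implicit. Unset Printing Implicit Defensive.
Import GRing.Theory Num.Theory.

Record graph := Graph {
  vert : finType;
  adj : rel vert;
  adj_sym : symmetric adj;
  adj_irr : irreflexive adj }.

Definition nv (G : graph) : nat := #|vert G|.

Definition colorable (G : graph) (k : nat) : bool :=
  [exists c : {ffun vert G -> 'I_k},
     [forall x, forall y, adj x y ==> (c x != c y)]].

Lemma colorable_nv (G : graph) : exists k, colorable G k.
Proof.
exists #|vert G|; apply/existsP; exists [ffun x => enum_rank x].
apply/forallP => x; apply/forallP => y; apply/implyP => hxy.
rewrite !ffunE; apply/negP => /eqP /enum_rank_inj exy.
by move: hxy; rewrite exy adj_irr.
Qed.

Definition chi (G : graph) : nat := ex_minn (@colorable_nv G).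

Definition is_clique (G : graph) (S : {set vert G}) : bool :=
  [forall x in S, forall y in S, (x != y) ==> adj x y].

Definition cl (G : graph) : nat :=
  \max_(S : {set vert G} | is_clique S) #|S|.

Definition fG (G : graph) : int := (chi G)%:Z - (cl G)%:Z.

Definition inM (x y : int) (G : graph) : Prop :=
  ((nv G)%:Z < (chi G)%:Z + 2 * fG G - x)%R /\ (fG G <= y)%R.

(* G = G1 + G2 with both parts nonempty: a bipartition (A, complement of A)
   of the vertex set into nonempty parts with every cross pair adjacent
   (G1, G2 are then the induced subgraphs on A and its complement). *)
Definition separable (G : graph) : Prop :=
  exists A : {set vert G},
    A != set0 /\ ~: A != set0 /\
    (forall u v, u \in A -> v \notin A -> adj u v).

From mathcomp Require Import all_boot all_order all_algebra.
From mathcomp Require Import zify.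
Set Implicit Arguments. Unset Strict Implicit. Unset Printing Implicit Defensive.
Import GRing.Theory Num.Theory.

(* Suppose G = G[A] + G[~A] is a join with both sides nonempty.  For a join,
   chromatic number, clique number and order are all additive:
   colour classes (and cliques) of the two sides can be combined freely, and
   every colour class (clique part) of G splits along the bipartition.
   Membership in M(0,y) means  |V| + 2 cl < 3 chi  and  chi - cl <= y;
   the first quantity is additive, so one side satisfies the strict
   inequality, and since chi - cl >= 0 on each side, that side also has
   chi - cl <= y.  This side is a graph of M(0,y) with fewer vertices,
   contradicting minimality. *)

Lemma chi_le (G : graph) (k : nat) : colorable G k -> chi G <= k.
Proof. by rewrite /chi; case: ex_minnP => m _; apply. Qed.

Lemma chi_colorable (G : graph) : colorable G (chi G).
Proof. by rewrite /chi; case: ex_minnP. Qed.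

Lemma colorable_card (G : graph) (T : finType) (c : vert G -> T) :
  (forall x y, adj x y -> c x != c y) -> colorable G #|T|.
Proof.
move=> hc; apply/existsP; exists [ffun x => enum_rank (c x)].
apply/forallP => x; apply/forallP => y; apply/implyP => hxy.
by rewrite !ffunE (inj_eq enum_rank_inj) hc.
Qed.

Lemma proper_colouring (G : graph) :
  exists c : vert G -> 'I_(chi G), forall x y, adj x y -> c x != c y.
Proof.
have /existsP [c /forallP hc] := chi_colorable G.
by exists c => x y; apply/implyP/(forallP (hc x)).
Qed.

Lemma cliqueP (G : graph) (S : {set vert G}) :
  reflect (forall x y, x \in S -> y \in S -> x != y -> adj x y) (is_clique S).
Proof.
apply: (iffP forallP) => [hS x y xS yS | hS x].
  by apply/implyP; apply: (implyP (forallP (implyP (hS x) xS) y) yS).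
by apply/implyP => xS; apply/forallP => y; apply/implyP => yS; apply/implyP; apply: hS.
Qed.

Lemma cl_max (G : graph) (S : {set vert G}) : is_clique S -> #|S| <= cl G.
Proof. by move=> hS; apply: (leq_bigmax_cond S hS). Qed.

Lemma cl_witness (G : graph) : exists2 S : {set vert G}, is_clique S & #|S| = cl G.
Proof.
have h0 : is_clique (set0 : {set vert G}) by apply/cliqueP => x y; rewrite inE.
rewrite /cl (bigmax_eq_arg _ h0).
by case: arg_maxnP => //= S hS _; exists S.
Qed.

(* The vertices of a clique get pairwise distinct colours: cl <= chi,
   i.e. f(G) >= 0. *)
Lemma cl_le_chi (G : graph) : cl G <= chi G.
Proof.
have [S /cliqueP hS <-] := cl_witness G; have [c hc] := proper_colouring G.
have inj : {in S &, injective c}.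
  by move=> x y xS yS; apply: contra_eq => nxy; apply/hc/hS.
rewrite -(card_in_imset inj).
by apply: leq_trans (max_card _) _; rewrite card_ord.
Qed.

Lemma cardsU_disjoint (T : finType) (B C : {set T}) :
  B :&: C = set0 -> #|B :|: C| = #|B| + #|C|.
Proof. by move=> disj; rewrite -cardsUI disj cards0 addn0. Qed.

Section Induced.
Variable G : graph.

Definition induced_adj (A : {set vert G}) : rel {x : vert G | x \in A} :=
  fun u v => adj (val u) (val v).

Lemma induced_adj_sym (A : {set vert G}) : symmetric (@induced_adj A).
Proof. by move=> u v; rewrite /induced_adj adj_sym. Qed.

Lemma induced_adj_irr (A : {set vert G}) : irreflexive (@induced_adj A).
Proof. by move=> u; rewrite /induced_adj adj_irr. Qed.

Definition induced (A : {set vert G}) : graph :=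
  Graph (@induced_adj_sym A) (@induced_adj_irr A).

Lemma nv_induced (A : {set vert G}) : nv (induced A) = #|A|.
Proof. by rewrite /nv /= card_sig. Qed.

Lemma nv_bipartition (A : {set vert G}) :
  nv G = nv (induced A) + nv (induced (~: A)).
Proof. by rewrite !nv_induced cardsC. Qed.

(* A proper colouring of G restricts to one of G[B] with the colours it uses
   on B. *)
Lemma chi_induced_le_image (T : finType) (c : vert G -> T) (B : {set vert G}) :
  (forall x y, adj x y -> c x != c y) -> chi (induced B) <= #|c @: B|.
Proof.
move=> hc; rewrite -card_sig; apply: chi_le.
pose cB (u : vert (induced B)) : {z | z \in c @: B} :=
  exist _ (c (val u)) (imset_f c (valP u)).
by apply: (@colorable_card _ _ cB) => u v huv; rewrite -val_eqE hc.
Qed.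

Lemma clique_induced (B : {set vert G}) (S : {set vert (induced B)}) :
  is_clique S -> is_clique (val @: S).
Proof.
move=> /cliqueP hS; apply/cliqueP => _ _ /imsetP [u uS ->] /imsetP [v vS ->] nuv.
by apply: hS => //; apply: contraNneq nuv => ->.
Qed.

Lemma clique_trace_le (S B : {set vert G}) :
  is_clique S -> #|S :&: B| <= cl (induced B).
Proof.
move=> /cliqueP hS; set U := [set u : vert (induced B) | val u \in S].
have -> : S :&: B = val @: U.
  apply/setP => z; rewrite inE; apply/andP/imsetP => [[zS zB] | [u]].
    by exists (exist _ z zB); rewrite // inE.
  by rewrite inE => uS ->; split => //; apply: valP.
rewrite card_imset; last exact: val_inj.
apply: cl_max; apply/cliqueP => u v; rewrite !inE => uS vS nuv.
by apply: hS => //; rewrite val_eqE.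
Qed.

Variant side_spec (A : {set vert G}) (x : vert G) :
    {z | z \in A} + {z | z \in ~: A} -> Type :=
  | SideIn (u : {z | z \in A}) of val u = x : @side_spec A x (inl u)
  | SideOut (v : {z | z \in ~: A}) of val v = x : @side_spec A x (inr v).

Definition side (A : {set vert G}) (x : vert G) :
    {z | z \in A} + {z | z \in ~: A} :=
  match boolP (x \in A) with
  | AltTrue xA => inl (exist _ x xA)
  | AltFalse xA => inr (exist _ x (etrans (in_setC x A) xA))
  end.

Lemma sideP (A : {set vert G}) (x : vert G) : @side_spec A x (side A x).
Proof. by rewrite /side; destruct (boolP (x \in A)); constructor. Qed.

(* Colouring the two sides with disjoint palettes: chi is subadditive. *)
Lemma chi_subadditive (A : {set vert G}) :
  chi G <= chi (induced A) + chi (induced (~: A)).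
Proof.
have [c1 hc1] := proper_colouring (induced A).
have [c2 hc2] := proper_colouring (induced (~: A)).
pose c x := match side A x with inl u => inl (c1 u) | inr v => inr (c2 v) end.
rewrite -[chi (induced A)]card_ord -[chi (induced (~: A))]card_ord -card_sum.
apply: chi_le.
apply: (@colorable_card _ _ c) => x y; rewrite /c.
case: (sideP A x) => [u <- | v <-]; case: (sideP A y) => [u' <- | v' <-] //= hxy.
- by rewrite (inj_eq inl_inj); apply: hc1.
- by rewrite (inj_eq inr_inj); apply: hc2.
Qed.

(* The trace of a maximum clique on each side: cl is subadditive. *)
Lemma cl_subadditive (A : {set vert G}) :
  cl G <= cl (induced A) + cl (induced (~: A)).
Proof.
have [S hS <-] := cl_witness G.
rewrite -(cardsID A S) setDE.
by apply: leq_add; apply: clique_trace_le.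
Qed.

Section Join.
Variable A : {set vert G}.
Hypothesis join : forall u v, u \in A -> v \notin A -> adj u v.

Lemma join_adj u v : u \in A -> v \in ~: A -> adj u v.
Proof. by rewrite inE; apply: join. Qed.

(* In a join the two sides need disjoint sets of colours. *)
Lemma chi_superadditive : chi (induced A) + chi (induced (~: A)) <= chi G.
Proof.
have [c hc] := proper_colouring G.
have disj : (c @: A) :&: (c @: ~: A) = set0.
  apply/setP => z; rewrite !inE.
  apply/negP => /andP [/imsetP [u uA ->] /imsetP [v vA]].
  by apply/eqP/hc/join_adj.
apply: leq_trans (leq_add (chi_induced_le_image A hc) (chi_induced_le_image (~: A) hc)) _.
rewrite -cardsU_disjoint //.
by apply: leq_trans (max_card _) _; rewrite card_ord.
Qed.

(* In a join, a clique of each side together form a clique. *)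
Lemma cl_superadditive : cl (induced A) + cl (induced (~: A)) <= cl G.
Proof.
have [S1 h1 <-] := cl_witness (induced A).
have [S2 h2 <-] := cl_witness (induced (~: A)).
have inS1 x : x \in val @: S1 -> x \in A by case/imsetP => u _ ->; apply: valP.
have inS2 x : x \in val @: S2 -> x \in ~: A by case/imsetP => u _ ->; apply: valP.
have disj : (val @: S1) :&: (val @: S2) = set0.
  apply/setP => z; rewrite !inE.
  by apply/negP => /andP [/inS1 zA /inS2]; rewrite inE zA.
have /cliqueP k1 := clique_induced h1; have /cliqueP k2 := clique_induced h2.
have clq : is_clique (val @: S1 :|: val @: S2).
  apply/cliqueP => x z; rewrite !inE => /orP [] hx /orP [] hz nxz.
  - exact: k1.
  - exact: join_adj (inS1 _ hx) (inS2 _ hz).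
  - by rewrite adj_sym; apply: join_adj (inS1 _ hz) (inS2 _ hx).
  - exact: k2.
move/cl_max: clq; rewrite cardsU_disjoint //.
by rewrite !card_imset //; apply: val_inj.
Qed.

Lemma chi_join : chi G = chi (induced A) + chi (induced (~: A)).
Proof. by apply/anti_leq; rewrite chi_subadditive chi_superadditive. Qed.

Lemma cl_join : cl G = cl (induced A) + cl (induced (~: A)).
Proof. by apply/anti_leq; rewrite cl_subadditive cl_superadditive. Qed.
End Join.
End Induced.

(* If chi, cl and the order of G are the sums of those of G1 and G2, and G
   lies in M(0,y), then so does G1 or G2: |V| + 2 cl - 3 chi is additive, and
   f = chi - cl is additive and nonnegative on each part.  The parameters are
   abstracted to plain naturals so that the arithmetic is pure linear. *)
Lemma inM_split (y : int) (G G1 G2 : graph) :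
  chi G = chi G1 + chi G2 -> cl G = cl G1 + cl G2 -> nv G = nv G1 + nv G2 ->
  inM 0 y G -> inM 0 y G1 \/ inM 0 y G2.
Proof.
move=> hchi hcl hnv; rewrite /inM /fG hchi hcl hnv.
move: (cl_le_chi G1) (cl_le_chi G2).
move: (chi G1) (chi G2) (cl G1) (cl G2) (nv G1) (nv G2) => k1 k2 c1 c2 n1 n2.
lia.
Qed.

Theorem lemma4p1 (y : int) :
  (exists G : graph, inM 0 y G) ->
  forall G0 : graph,
    inM 0 y G0 ->
    (forall G : graph, inM 0 y G -> nv G0 <= nv G) ->
    ~ separable G0.
Proof.
move=> _ G0 hM hmin [A [nA [nC join]]].
have hnv := nv_bipartition A.
have pos1 : 0 < nv (induced A) by rewrite nv_induced card_gt0.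
have pos2 : 0 < nv (induced (~: A)) by rewrite nv_induced card_gt0.
have [h | h] := inM_split (chi_join join) (cl_join join) hnv hM;
  move/hmin: h; rewrite hnv; lia.
Qed.
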